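(* Let $W,M$ be disjoint with $|W|=|M|=n$, and let $\succ_W\in\mathcal F(W,M)$ and $\succ_M\in\mathcal F(M,W)$. Every algorithm for finding a stable marriage, or for verifying the stability of a marriage (when given as input a marriage that is stable with respect to $\succ_W,\succ_M$), that performs only pairwise-comparison queries onto $W$ (and arbitrary queries onto $M$), performs, on input $\succ_W,\succ_M$, at least as many queries onto $W$ as the men-proposing deferred-acceptance algorithm performs on input $\succ_W,\succ_M$.
   Context: $\mathcal F(W,M)$ is the set of profiles assigning each woman a total order on $M$; $\mathcal F(M,W)$ analogously for men. A perfect marriage is a bijection between $W$ and $M$; a pair $(w,m)$ is blocking for $\mu$ if $w$ prefers $m$ to her spouse in $\mu$ and $m$ prefers $w$ to his spouse in $\mu$; $\mu$ is stable if it has no blocking pair. A pairwise-comparison query onto $W$ asks whether $m\succ_w m'$ for given $w\in W$, $m,m'\in M$. The men-proposing deferred-acceptance algorithm: initially everyone is provisionally single. While some man is provisionally single, pick an arbitrary provisionally single man $m$; he proposes to the highest-ranked woman $w$ on his list who has not yet rejected him. If $w$ is provisionally single, $m$ and $w$ become provisionally married. Otherwise $w$ is provisionally married to some $m'$, and one pairwise-comparison query onto $w$ is made: if $m\succ_w m'$, $w$ rejects $m'$ (who becomes provisionally single) and becomes provisionally married to $m$; else $w$ rejects $m$. When no man is provisionally single, the provisional couples form the output. (All runs on a given input make the same number of queries onto $W$.) *)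

From mathcomp Require Import all_boot.
Set Implicit Arguments. Unset Strict Implicit. Unset Printing Implicit Defensive.

(* A strict total order (the paper's "total order", read strictly). *)
Definition strict_total (T : finType) (r : rel T) : Prop :=
  [/\ irreflexive r, transitive r & forall x y, x != y -> r x y || r y x].

(* Profiles: pW w m m'  means  m >_w m' ;  pM m w w'  means  w >_m w'. *)
Definition profile (A B : finType) (p : A -> rel B) : Prop :=
  forall a, strict_total (p a).

Section Marriage.
Variables (W M : finType) (pW : W -> rel M) (pM : M -> rel W).

(* A perfect marriage: a bijection W -> M (injective, with |W| = |M|). *)
Definition perfect (mu : W -> M) : Prop := injective mu.

Definition blocking (mu : W -> M) (w : W) (m : M) : bool :=
  pW w m (mu w) && [exists w', (mu w' == m) && pM m w w'].

Definition stable (mu : W -> M) : Prop :=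
  perfect mu /\ forall w m, ~~ blocking mu w m.

(* Men-proposing deferred acceptance, counting queries onto W.
   eng w = Some m : w provisionally married to m;
   rej m : set of women who have rejected m.
   The provisionally single man chosen is the first one in enum order
   (all runs make the same number of queries onto W). *)
Fixpoint da_loop (fuel : nat) (eng : W -> option M) (rej : M -> {set W})
    (cnt : nat) : nat :=
  match fuel with
  | 0 => cnt
  | fuel'.+1 =>
    match [pick m | [forall w, eng w != Some m]] with
    | None => cnt
    | Some m =>
      match [pick w | (w \notin rej m) &&
               [forall w', ((w' \notin rej m) && (w' != w)) ==> pM m w w']] with
      | None => cnt
      | Some w =>
        let eng' := fun x => if x == w then Some m else eng x in
        match eng w with
        | None => da_loop fuel' eng' rej cnt
        | Some m' =>
          if pW w m m' then
            da_loop fuel' eng'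
              (fun x => if x == m' then w |: rej x else rej x) cnt.+1
          else
            da_loop fuel' eng
              (fun x => if x == m then w |: rej x else rej x) cnt.+1
        end
      end
    end
  end.

(* Each iteration is one proposal; there are at most |M|*|W| proposals. *)
Definition da_queries : nat :=
  da_loop (#|M| * #|W|).+1 (fun _ => None) (fun _ => set0) 0.

End Marriage.

(* Adaptive algorithms querying W only through pairwise comparisons:
   decision trees whose internal nodes are the query "m >_w m' ?". *)
Inductive qtree (W M A : Type) : Type :=
| Leaf of A
| Query of W & M & M & qtree W M A & qtree W M A.
Arguments Leaf {W M A}.
Arguments Query {W M A}.

Fixpoint qout (W M A : Type) (pW : W -> M -> M -> bool) (t : qtree W M A) : A :=
  match t with
  | Leaf a => a
  | Query w m m' t1 t2 => if pW w m m' then qout pW t1 else qout pW t2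
  end.

Fixpoint qcount (W M A : Type) (pW : W -> M -> M -> bool) (t : qtree W M A) : nat :=
  match t with
  | Leaf _ => 0
  | Query w m m' t1 t2 => (if pW w m m' then qcount pW t1 else qcount pW t2).+1
  end.

(* An algorithm may query M arbitrarily (and for free): it is modelled as a
   function of the men's profile returning a W-query decision tree. *)
Definition finder (W M : finType) := (M -> rel W) -> qtree W M (W -> M).
Definition verifier (W M : finType) := (M -> rel W) -> (W -> M) -> qtree W M bool.

Definition finds_stable (W M : finType) (A : finder W M) : Prop :=
  forall pW pM, profile pW -> profile pM -> stable pW pM (qout pW (A pM)).

Definition verifies_stable (W M : finType) (V : verifier W M) : Prop :=
  forall pW pM (mu : W -> M), profile pW -> profile pM -> perfect mu ->
    (qout pW (V pM mu) <-> stable pW pM mu).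

From mathcomp Require Import all_boot.
From mathcomp Require Import zify.
Set Implicit Arguments. Unset Strict Implicit. Unset Printing Implicit Defensive.

(* Every query of deferred acceptance produces a new rejection, so it makes as
   many queries onto W as there are rejections. Throughout the run no rejected
   pair is matched in a stable marriage, and every man prefers each woman who
   rejected him or holds him to his spouse in any stable marriage [mu]. If a
   query tree asks fewer questions, some woman [w] is asked fewer comparisons
   than the number of men she rejected; among these men and her final partner,
   the comparisons put to her then leave a block [C] of men, closed under them,
   containing such a man [y] but not [mu w]. Moving [C] to the top of her list
   changes no answer, hence not the tree's output, yet makes [(w, y)] block [mu]. *)

Section QueryTrees.
Variables (W M : eqType) (A : Type) (pW : W -> M -> M -> bool).

Fixpoint qtrace (t : qtree W M A) : seq (W * (M * M)) :=
  match t with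
  | Leaf _ => [::]
  | Query w m m' t1 t2 => (w, (m, m')) :: (if pW w m m' then qtrace t1 else qtrace t2)
  end.

Lemma size_qtrace t : size (qtrace t) = qcount pW t.
Proof. by elim: t => //= w m m' t1 IH1 t2 IH2; case: ifP; rewrite ?IH1 ?IH2. Qed.

Lemma qout_eq_on_trace (pW' : W -> M -> M -> bool) t :
    (forall w m m', (w, (m, m')) \in qtrace t -> pW' w m m' = pW w m m') ->
  qout pW' t = qout pW t.
Proof.
elim: t => //= w m m' t1 IH1 t2 IH2 agree.
rewrite agree ?mem_head //; case: (pW w m m') agree => agree; [apply: IH1 | apply: IH2];
  by move=> ? ? ? q_in; apply: agree; rewrite in_cons q_in orbT.
Qed.

End QueryTrees.

Lemma qcount_lt_sum (W : finType) (M : eqType) (A : Type) (pW : W -> rel M)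
    (t : qtree W M A) (a : W -> nat) :
  qcount pW t < \sum_w a w ->
  exists w, count (fun q => q.1 == w) (qtrace pW t) < a w.
Proof.
rewrite -size_qtrace -sum1_size (partition_big fst predT) //= => lt_sum.
apply/existsP; apply: contraTT lt_sum => /existsPn le_a; rewrite -leqNgt.
by apply: leq_sum => w _; rewrite sum1_count leqNgt le_a.
Qed.

Lemma closed_separator (T : finType) (E : seq (T * T)) (X S : {set T}) :
    size E + #|X| < #|S| ->
  exists C : {set T}, [/\ forall e, e \in E -> (e.1 \in C) = (e.2 \in C),
                          [disjoint C & X] & exists2 y, y \in S & y \in C].
Proof.
elim: E X => [|e E IH] X /= ltS.
  have /subsetPn [y yS yX] : ~~ (S \subset X).
    by apply/negP => /subset_leq_card; rewrite leqNgt ltS.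
  by exists [set y]; split=> //; [rewrite disjoints1 | exists y; rewrite ?inE].
have ltS1 x : size E + #|x |: X| < #|S|.
  by apply: leq_ltn_trans ltS; rewrite cardsU1; case: (x \notin X); lia.
have subX x : X \subset x |: X by apply/subsetP => z; rewrite !inE orbC => ->.
case: (IH _ (ltS1 e.1)) => C1 [cl1 dis1 [y1 y1S y1C]].
case: (IH _ (ltS1 e.2)) => C2 [cl2 dis2 [y2 y2S y2C]].
have e1C1 : e.1 \notin C1 by rewrite (disjointFl dis1) ?setU11.
have e2C2 : e.2 \notin C2 by rewrite (disjointFl dis2) ?setU11.
(* If neither [C1] nor [C2] is closed under [e], their union contains both ends. *)
have [e2C1|e2C1] := boolP (e.2 \in C1); last first.
  exists C1; split; [|exact: disjointWr dis1|by exists y1].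
  move=> f; rewrite in_cons => /predU1P [->|]; last exact: cl1.
  by rewrite (negbTE e1C1) (negbTE e2C1).
have [e1C2|e1C2] := boolP (e.1 \in C2); last first.
  exists C2; split; [|exact: disjointWr dis2|by exists y2].
  move=> f; rewrite in_cons => /predU1P [->|]; last exact: cl2.
  by rewrite (negbTE e1C2) (negbTE e2C2).
exists (C1 :|: C2); split.
- move=> f; rewrite in_cons => /predU1P [->|fE]; first by rewrite !inE e2C1 e1C2 orbT.
  by rewrite !inE (cl1 f fE) (cl2 f fE).
- rewrite !disjoints_subset subUset -!disjoints_subset.
  by rewrite (disjointWr _ dis1) ?(disjointWr _ dis2).
- by exists y1; rewrite // inE y1C.
Qed.

Definition raise (T : finType) (C : {set T}) (r : rel T) : rel T :=
  fun x z => if (x \in C) == (z \in C) then r x z else x \in C.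

Lemma strict_total_raise (T : finType) (C : {set T}) (r : rel T) :
  strict_total r -> strict_total (raise C r).
Proof.
case=> irr tr tot; split.
- by move=> x; rewrite /raise eqxx irr.
- move=> y x z; rewrite /raise.
  by case: (x \in C); case: (y \in C); case: (z \in C) => //=; apply: tr.
- by move=> x y /tot; rewrite /raise eq_sym; case: (x \in C); case: (y \in C).
Qed.

Lemma profile_set (A B : finType) (p : A -> rel B) (a : A) (r : rel B) :
  profile p -> strict_total r -> profile (fun x => if x == a then r else p x).
Proof. by move=> p_st r_st x; case: ifP. Qed.

Lemma stable_not_blocked (W M : finType) (pW : W -> rel M) (pM : M -> rel W)
    (mu : W -> M) w w' :
  stable pW pM mu -> pM (mu w') w w' -> ~~ pW w (mu w') (mu w).
Proof.
case=> _ /(_ w (mu w')); rewrite /blocking negb_and => /orP [] // /existsPn.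
by move=> /(_ w'); rewrite eqxx /= => /negbTE ->.
Qed.

Lemma perfect_onto (W M : finType) (mu : W -> M) :
  #|W| = #|M| -> perfect mu -> forall m, exists w, mu w = m.
Proof.
move=> eq_card inj_mu m.
by case/codomP: (inj_card_onto inj_mu (eq_leq (esym eq_card)) m) => w ->; exists w.
Qed.

Section DeferredAcceptance.
Variables (W M : finType) (pW : W -> rel M) (pM : M -> rel W).
Hypotheses (HpW : profile pW) (HpM : profile pM) (card_WM : #|W| = #|M|).

Definition engage (eng : W -> option M) (w : W) (m : M) (x : W) : option M :=
  if x == w then Some m else eng x.

Definition reject (rej : M -> {set W}) (m : M) (w : W) (x : M) : {set W} :=
  if x == m then w |: rej x else rej x.

Lemma in_reject (rej : M -> {set W}) m w x w1 :
  (w1 \in reject rej m w x) = (x == m) && (w1 == w) || (w1 \in rej x).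
Proof. by rewrite /reject; case: (x == m); rewrite ?in_setU1. Qed.

Definition rejections (rej : M -> {set W}) : nat :=
  \sum_w #|[set m | w \in rej m]|.

Lemma rejections_reject (rej : M -> {set W}) m w :
  w \notin rej m -> rejections (reject rej m w) = (rejections rej).+1.
Proof.
move=> w_new; rewrite /rejections (bigD1 w) //= [in RHS](bigD1 w) //=.
have -> : [set x | w \in reject rej m w x] = m |: [set x | w \in rej x].
  by apply/setP => x; rewrite !inE in_reject eqxx andbT.
rewrite cardsU1 inE w_new addSn; congr (_ + _).+1.
apply: eq_bigr => w1 w1w; apply: eq_card => x.
by rewrite !inE in_reject (negbTE w1w) andbF.
Qed.

Record da_invariant (eng : W -> option M) (rej : M -> {set W}) : Prop := {
  engaged_unrejected : forall w m, eng w = Some m -> w \notin rej m;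
  rejecting_engaged : forall w m, w \in rej m -> eng w != None;
  rejected_unstable : forall mu, stable pW pM mu ->
    forall w m, w \in rej m -> mu w != m;
  rejected_above : forall m w w', w \in rej m \/ eng w = Some m ->
    pM m w' w -> w' \in rej m }.

Lemma dominated_unstable eng rej mu w m0 m1 :
    da_invariant eng rej -> stable pW pM mu ->
    (forall w', pM m0 w' w -> w' \in rej m0) -> pW w m0 m1 ->
  mu w != m1.
Proof.
move=> inv mu_st m0_above w_m0_m1; apply/eqP => muw.
have [w2 muw2] := perfect_onto card_WM mu_st.1 m0.
have w2w : w != w2.
  by apply: contraTneq w_m0_m1 => ww2; rewrite -muw2 -ww2 muw; case: (HpW w) => ->.
have [_ _ /(_ _ _ w2w) /orP [m0_w_w2|m0_w2_w]] := HpM m0.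
  by move: m0_w_w2; rewrite -muw2 => /(stable_not_blocked mu_st); rewrite muw2 muw w_m0_m1.
by move: (rejected_unstable inv mu_st (m0_above _ m0_w2_w)); rewrite muw2 eqxx.
Qed.

Section Proposal.
Variables (eng : W -> option M) (rej : M -> {set W}) (m : M) (w : W).
Hypotheses (inv : da_invariant eng rej) (m_single : forall x, eng x != Some m).
Hypotheses (w_unrejected : w \notin rej m)
  (w_best : forall w', pM m w' w -> w' \in rej m).

Lemma da_invariant_engage : eng w = None -> da_invariant (engage eng w m) rej.
Proof.
case: inv => Ieng Irej Ist Iabove w_single; split => //.
- by move=> x m1; rewrite /engage; case: eqP => [-> [<-]|_]; last exact: Ieng.
- by move=> x m1 /Irej; rewrite /engage; case: ifP.
- move=> m1 x w' [x_rej|]; first by apply: Iabove; left.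
  by rewrite /engage; case: eqP => [-> [<-]|_ engx]; [exact: w_best | apply: Iabove; right].
Qed.

Lemma da_invariant_trade m' : eng w = Some m' -> pW w m m' ->
  da_invariant (engage eng w m) (reject rej m' w).
Proof.
case: inv => Ieng Irej Ist Iabove w_m' w_m_m'.
have m'm : m' != m by apply: contraTneq (m_single w) => <-; rewrite w_m' eqxx.
split.
- move=> x m1; rewrite /engage in_reject; case: eqP => [-> [<-]|_ engx].
    by rewrite eq_sym (negbTE m'm).
  by rewrite andbF /= Ieng.
- by move=> x m1; rewrite /engage in_reject; case: ifP => // _; rewrite andbF => /Irej.
- move=> mu mu_st x m1; rewrite in_reject => /orP [/andP [/eqP -> /eqP ->]|]; last exact: Ist.
  exact: (dominated_unstable inv mu_st w_best w_m_m').
- move=> m1 x w' x_m1 m1_w'_x; rewrite in_reject; apply/orP; right.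
  have [xw|xw] := eqVneq x w; last first.
    by apply: Iabove m1_w'_x; rewrite in_reject /engage (negbTE xw) andbF in x_m1.
  move: x_m1 m1_w'_x; rewrite xw in_reject /engage !eqxx andbT.
  case=> [/orP [/eqP ->|w_rej]|[<-]]; [move/Iabove; apply; right|
    move/Iabove; apply; left|exact: w_best] => //.
Qed.

Lemma da_invariant_refuse m' : eng w = Some m' -> ~~ pW w m m' ->
  da_invariant eng (reject rej m w).
Proof.
case: inv => Ieng Irej Ist Iabove w_m' w_m_m'.
have m'm : m' != m by apply: contraTneq (m_single w) => <-; rewrite w_m' eqxx.
have w_m'_m : pW w m' m.
  by case: (HpW w) => _ _ /(_ _ _ m'm) /orP [] //; rewrite (negbTE w_m_m').
split.
- move=> x m1 engx; rewrite in_reject (negbTE (Ieng _ _ engx)) orbF.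
  by apply/nandP; left; apply: contraNneq (m_single x) => <-; rewrite engx eqxx.
- by move=> x m1; rewrite in_reject => /orP [/andP [_ /eqP ->]|/Irej]; rewrite ?w_m'.
- move=> mu mu_st x m1; rewrite in_reject => /orP [/andP [/eqP -> /eqP ->]|]; last exact: Ist.
  apply: (dominated_unstable inv mu_st _ w_m'_m) => w' m'_w'_w.
  by apply: Iabove m'_w'_w; right.
- move=> m1 x w' x_m1 m1_w'_x; rewrite in_reject; apply/orP; right.
  case: x_m1 => [|engx]; last by apply: Iabove m1_w'_x; right.
  rewrite in_reject => /orP [/andP [/eqP m1m /eqP xw]|x_rej].
    by rewrite m1m; apply: w_best; rewrite -m1m -xw.
  by apply: Iabove m1_w'_x; left.
Qed.

End Proposal.

Lemma da_loop_invariant fuel eng rej : da_invariant eng rej ->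
  exists eng' rej', da_invariant eng' rej' /\
    da_loop pW pM fuel eng rej (rejections rej) = rejections rej'.
Proof.
elim: fuel eng rej => [|fuel IH] eng rej inv /=; first by exists eng, rej.
case: pickP => [m /forallP m_single|_]; last by exists eng, rej.
case: pickP => [w /andP [w_unrej /forallP w_top]|_]; last by exists eng, rej.
have w_best w' : pM m w' w -> w' \in rej m.
  case: (HpM m) => irr tr _ m_w'_w; apply: contraT => w'_unrej.
  have w'w : w' != w by apply: contraTneq m_w'_w => ->; rewrite irr.
  by move: (w_top w'); rewrite w'_unrej w'w /= => /(tr _ _ _ m_w'_w); rewrite irr.
case w_eng: (eng w) => [m'|]; last first.
  by apply: IH; exact: (da_invariant_engage inv w_unrej w_best w_eng).
case: ifP => [w_m_m'|/negbT w_m_m'].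
  rewrite -(rejections_reject (engaged_unrejected inv w_eng)).
  by apply: IH; exact: (da_invariant_trade inv m_single w_unrej w_best w_eng w_m_m').
rewrite -(rejections_reject w_unrej).
by apply: IH; exact: (da_invariant_refuse inv m_single w_best w_eng w_m_m').
Qed.

Lemma da_queries_rejections :
  exists eng rej, da_invariant eng rej /\ da_queries pW pM = rejections rej.
Proof.
have no_rejections : rejections (fun _ => set0) = 0.
  by apply: big1 => w _; apply/eqP; rewrite cards_eq0; apply/eqP/setP => m; rewrite !inE.
rewrite /da_queries -no_rejections; apply: da_loop_invariant.
by split=> // [w m|mu _ w m|m w w' []]; rewrite ?in_set0.
Qed.

Lemma proposed_prefers eng rej mu w y w' :
    da_invariant eng rej -> stable pW pM mu ->
    w \in rej y \/ eng w = Some y -> mu w' = y -> w != w' ->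
  pM y w w'.
Proof.
move=> inv mu_st w_y muw' ww'; have [_ _ /(_ w w' ww') /orP [] // y_w'_w] := HpM y.
by move: (rejected_unstable inv mu_st (rejected_above inv w_y y_w'_w)); rewrite muw' eqxx.
Qed.

Lemma fooling_profile (A : Type) (t : qtree W M A) mu :
    stable pW pM mu -> qcount pW t < da_queries pW pM ->
  exists pW', [/\ profile pW', qout pW' t = qout pW t & ~ stable pW' pM mu].
Proof.
move=> mu_st; have [eng [rej [inv ->]]] := da_queries_rejections.
case/qcount_lt_sum => w; set Rw := [set m | w \in rej m] => few_queries.
have [m0 w_m0] : exists m0, eng w = Some m0.
  have /card_gt0P [m1] : 0 < #|Rw| by apply: leq_ltn_trans few_queries.
  by rewrite inE => /(rejecting_engaged inv); case: (eng w) => // m0 _; exists m0.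
have m0_new : m0 \notin Rw by rewrite inE (engaged_unrejected inv w_m0).
set E := [seq q.2 | q <- qtrace pW t & q.1 == w].
have [|C [C_closed C_muw [y y_prop yC]]] := @closed_separator _ E [set mu w] (m0 |: Rw).
  by rewrite size_map size_filter cards1 cardsU1 m0_new addn1 add1n ltnS.
rewrite disjoint_sym disjoints1 in C_muw.
exists (fun x => if x == w then raise C (pW w) else pW x); split.
- exact: profile_set HpW (strict_total_raise C (HpW w)).
- apply: qout_eq_on_trace => x m m' q_in; case: eqP => [xw|//]; subst x.
  have /C_closed /= C_mm' : (m, m') \in E.
    by apply/mapP; exists (w, (m, m')); rewrite // mem_filter eqxx.
  by rewrite /raise C_mm' eqxx.
- move=> st'; have [w' muw'] := perfect_onto card_WM mu_st.1 y.
  have ww' : w != w' by apply: contraTneq yC => ww'; rewrite -muw' -ww'.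
  have w_y : w \in rej y \/ eng w = Some y.
    by move: y_prop; rewrite !inE => /predU1P [->|]; [right | left].
  move: (proposed_prefers inv mu_st w_y muw' ww'); rewrite -muw'.
  by move/(stable_not_blocked st'); rewrite eqxx /raise muw' yC (negbTE C_muw).
Qed.

End DeferredAcceptance.

Theorem theorem30 (W M : finType) (n : nat) (hW : #|W| = n) (hM : #|M| = n)
    (pW : W -> rel M) (pM : M -> rel W)
    (HpW : profile pW) (HpM : profile pM) :
  (forall A : finder W M, finds_stable A ->
     da_queries pW pM <= qcount pW (A pM)) /\
  (forall V : verifier W M, verifies_stable V ->
     forall mu : W -> M, stable pW pM mu ->
       da_queries pW pM <= qcount pW (V pM mu)).
Proof.
have card_WM : #|W| = #|M| by rewrite hW hM.
split=> [A A_finds | V V_verifies mu mu_st]; rewrite leqNgt; apply/negP.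
  move/(fooling_profile HpW HpM card_WM (A_finds pW pM HpW HpM)).
  case=> pW' [pW'_st same_out not_st].
  by apply: not_st; rewrite -same_out; apply: A_finds.
move/(fooling_profile HpW HpM card_WM mu_st) => [pW' [pW'_st same_out not_st]].
apply: not_st; apply/(V_verifies pW' pM mu pW'_st HpM mu_st.1).
by rewrite same_out; apply/(V_verifies pW pM mu HpW HpM mu_st.1).
Qed.
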